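(* Let $\sigma$ be an erasing $k$-block substitution with $w_\epsilon\ne1^k$ that satisfies the optimality condition. Let $y\in\mathbb I$ be a point with the following property: for each $w\in\{0,1\}^\omega$ with $y=0.w$, the sequence of blocks $(b_i)_{i\ge1}$ with $w=\prod_{i\ge1}\sigma(b_i)$ and $\sigma(b_i)\neq\epsilon$ for all $i$ is unique. If moreover $y$ is not a dyadic rational, then the closure of $f_\sigma^{-1}(y)$ in $\mathbb I$ is a Cantor space, i.e. a nonempty, compact, perfect, totally disconnected (nowhere dense) subset of $\mathbb I$.
   Context: Notation: $\mathbb I=[0,1]$. $\{0,1\}^*$ and $\{0,1\}^\omega$ denote finite and infinite binary words, and $\epsilon$ is the empty word. For a word $w$, set $0.w=\sum_iw_i2^{-i}$. For $x\in(0,1]$, $\widetilde x$ is the unique infinite binary expansion of $x$ not ending in $0^\infty$. Fix $k\ge2$. An erasing $k$-block substitution is a map $\sigma:\{0,1\}^k\to\{0,1\}^*$ with exactly one block $w_\epsilon$ such that $\sigma(w_\epsilon)=\epsilon$. It acts blockwise on infinite words, concatenating the images of consecutive $k$-blocks. The map $f_\sigma:\mathbb I\to\mathbb I$ is defined by $f_\sigma(x)=0.\sigma(\widetilde x)$ if $x\in(0,1]$ and $\widetilde x\neq w_\epsilon^\infty$, and $f_\sigma(x)=0$ otherwise. Optimality condition: every $w\in\{0,1\}^\omega$ can be written as $w=\prod_{i\ge1}\sigma(b_i)$ with blocks $b_i\in\{0,1\}^k$ satisfying $\sigma(b_i)\ne\epsilon$. *)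

From HB Require Import structures.
From mathcomp Require Import all_boot all_order all_algebra.
From mathcomp Require Import all_classical all_reals all_analysis.
From Stdlib Require Import ClassicalEpsilon.
Set Implicit Arguments. Unset Strict Implicit. Unset Printing Implicit Defensive.
Import Order.TTheory GRing.Theory Num.Theory numFieldNormedType.Exports.
Local Open Scope classical_set_scope.
Local Open Scope ring_scope.

(* Infinite binary words w in {0,1}^omega are functions nat -> bool, with
   (w i) the (i+1)-th letter (true = 1).  Finite words are seq bool. *)

Definition binval {R : realType} (w : nat -> bool) : R :=
  limn (series (fun i : nat => ((w i)%:R / 2 ^+ i.+1 : R))).

Definition ends_in_zeros (w : nat -> bool) : Prop :=
  exists N, forall n, (N <= n)%N -> w n = false.

(* x~ : the unique infinite binary expansion of x not ending in 0^oo
   (chosen by Hilbert's epsilon; for x in (0,1] it exists and is unique). *)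
Definition xtilde {R : realType} (x : R) : nat -> bool :=
  epsilon (inhabits (fun _ => false))
    (fun w => binval w = x /\ ~ ends_in_zeros w).

(* Infinite concatenation prod_{i} u_i of finite words: letter n is the n-th
   letter of the finite prefix u_0 ... u_(m-1) for m large enough; if the
   concatenation is a finite word, it is padded with 0s (which does not change
   its binary value 0.(...)). *)
Definition prefix_cat (u : nat -> seq bool) (m : nat) : seq bool :=
  flatten [seq u i | i <- iota 0 m].

Definition inf_cat (u : nat -> seq bool) : nat -> bool :=
  fun n => `[< exists m, nth false (prefix_cat u m) n = true >].

Definition kblock (k : nat) (w : nat -> bool) (i : nat) : k.-tuple bool :=
  [tuple w (i * k + j)%N | j < k].

Definition subst_word (k : nat) (sigma : k.-tuple bool -> seq bool)
  (w : nat -> bool) : nat -> bool :=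
  inf_cat (fun i => sigma (kblock k w i)).

Definition erasing_subst (k : nat) (sigma : k.-tuple bool -> seq bool)
  (we : k.-tuple bool) : Prop :=
  sigma we = [::] /\ forall b, sigma b = [::] -> b = we.

Definition is_periodic_block (k : nat) (we : k.-tuple bool) (w : nat -> bool)
  : Prop := forall i, kblock k w i = we.

(* f_sigma : I -> I (extended by 0 outside (0,1]) *)
Definition f_sigma {R : realType} (k : nat) (sigma : k.-tuple bool -> seq bool)
  (we : k.-tuple bool) (x : R) : R :=
  if `[< 0 < x <= 1 /\ ~ is_periodic_block we (xtilde x) >]
  then binval (subst_word sigma (xtilde x))
  else 0.

Definition block_decomp (k : nat) (sigma : k.-tuple bool -> seq bool)
  (b : nat -> k.-tuple bool) (w : nat -> bool) : Prop :=
  (forall i, sigma (b i) <> [::]) /\ inf_cat (fun i => sigma (b i)) = w.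

Definition optimal (k : nat) (sigma : k.-tuple bool -> seq bool) : Prop :=
  forall w : nat -> bool, exists b, block_decomp sigma b w.

Definition dyadic_rational {R : realType} (y : R) : Prop :=
  exists (m : int) (n : nat), y = m%:~R / 2 ^+ n.

From HB Require Import structures.
From mathcomp Require Import all_boot all_order all_algebra.
From mathcomp Require Import all_classical all_reals all_analysis.
From mathcomp Require Import zify ring lra.
From Stdlib Require Import ClassicalEpsilon.
Set Implicit Arguments. Unset Strict Implicit. Unset Printing Implicit Defensive.
Import Order.TTheory GRing.Theory Num.Theory numFieldNormedType.Exports.
Local Open Scope classical_set_scope.
Local Open Scope ring_scope.

(* A point x of F is studied through its expansion x~ (the one not ending in
   0^oo), since f_sigma x = 0.sigma(x~).  As y is not dyadic, y~ is the only
   expansion of y, so sigma(x~) = y~ for every x in F and, by the uniqueness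
   hypothesis, the non-erased blocks of x~ form THE decomposition of y~.
   - F is nonempty: interleave a decomposition of y~ (optimality) with erased
     blocks, which also prevents the preimage from ending in zeros.
   - F has no isolated point: inserting an erased block far out in x~ gives
     another point of F arbitrarily close to x.
   - F is nowhere dense: keep x~ up to a late non-erased block and replace that
     block by a third one; no point of F lies in the resulting dyadic interval,
     which is arbitrarily close to x.
   Then C is compact (a closed subset of [0, 1]), perfect, has empty interior,
   and is therefore totally disconnected, by facts on subsets of the line. *)

Lemma dist_le_of_interval (R : realFieldType) (A e s p : R) :
  A <= s <= A + e -> A <= p <= A + e -> `|s - p| <= e.
Proof.
by move=> /andP[h1 h2] /andP[h3 h4]; rewrite ler_distl; apply/andP; split; lra.
Qed.

Section BinaryExpansions.
Variable R : realType.

(* [bnum w n] is the integer written w_0 w_1 ... w_(n-1) in binary, so that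
   the n-th partial sum of 0.w is bnum w n / 2^n. *)
Fixpoint bnum (w : nat -> bool) (n : nat) : nat :=
  if n is m.+1 then w m + (bnum w m).*2 else 0%N.

Lemma bnum_eqP (w1 w2 : nat -> bool) M :
  (forall i, (i < M)%N -> w1 i = w2 i) <-> bnum w1 M = bnum w2 M.
Proof.
elim: M => [|M IH] /=; first by split.
split=> [eqw|eqb].
  by rewrite eqw // (proj1 IH) // => i iM; apply: eqw; exact: ltnW.
move=> i; rewrite ltnS leq_eqVlt => /orP[/eqP ->|iM].
  have := congr1 odd eqb; rewrite !oddD !odd_double !addbF.
  by case: (w1 M); case: (w2 M).
by apply: (proj2 IH) => //; have := congr1 half eqb; rewrite !half_bit_double.
Qed.

Lemma bnum_bound w N d :
  (2 ^ d * bnum w N <= bnum w (N + d))%N /\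
  (bnum w (N + d) + 1 <= 2 ^ d * (bnum w N + 1))%N.
Proof.
elim: d => [|d [IH1 IH2]]; first by rewrite addn0 expn0 !mul1n.
rewrite addnS /= expnS -!mulnA -muln2; split; first rewrite mulnC.
  by case: (w (N + d)); lia.
by case: (w (N + d)); lia.
Qed.

Lemma bnum_lt w N : (bnum w N < 2 ^ N)%N.
Proof. by have [_] := bnum_bound w 0 N; rewrite add0n /= muln1; lia. Qed.

Lemma bnum_zeros (w : nat -> bool) M d :
  (forall n, (M <= n)%N -> w n = false) -> bnum w (M + d) = (2 ^ d * bnum w M)%N.
Proof.
move=> w0; elim: d => [|d IH]; first by rewrite addn0 mul1n.
by rewrite addnS /= w0 ?leq_addr // IH expnS -muln2; lia.
Qed.

Lemma pow2_gt0 n : 0 < (2 : R) ^+ n.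
Proof. exact: exprn_gt0. Qed.

Lemma dyadic_rescale (p n m : nat) : (n <= m)%N ->
  p%:R / 2 ^+ n = (p * 2 ^ (m - n))%:R / 2 ^+ m :> R.
Proof.
move=> nm; rewrite natrM natrX -{2}(subnKC nm) exprD.
have h1 := pow2_gt0 n; have h2 := pow2_gt0 (m - n).
by field; rewrite !gt_eqF.
Qed.

Lemma ler_dyadic (p q m : nat) :
  (p%:R / 2 ^+ m <= q%:R / 2 ^+ m :> R) = (p <= q)%N.
Proof. by rewrite ler_pM2r ?invr_gt0 ?pow2_gt0 // ler_nat. Qed.

Lemma ltr_dyadic (p q m : nat) :
  (p%:R / 2 ^+ m < q%:R / 2 ^+ m :> R) = (p < q)%N.
Proof. by rewrite ltr_pM2r ?invr_gt0 ?pow2_gt0 // ltr_nat. Qed.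

Lemma dyadic_succ (a n : nat) :
  (a + 1)%:R / 2 ^+ n = a%:R / 2 ^+ n + (2 ^+ n)^-1 :> R.
Proof. by rewrite natrD mulrDl mul1r. Qed.

Lemma dyadic_rational_frac (p n : nat) : dyadic_rational (p%:R / 2 ^+ n : R).
Proof. by exists p%:Z, n. Qed.

Lemma dyadic_intervals_nested (w : nat -> bool) n m : (n <= m)%N ->
  (bnum w n)%:R / 2 ^+ n <= (bnum w m)%:R / 2 ^+ m :> R /\
  (bnum w m + 1)%:R / 2 ^+ m <= (bnum w n + 1)%:R / 2 ^+ n :> R.
Proof.
move=> nm; have [h1 h2] := bnum_bound w n (m - n); rewrite subnKC // in h1 h2.
by rewrite (dyadic_rescale (bnum w n) nm) (dyadic_rescale (bnum w n + 1) nm)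
  !ler_dyadic; split; lia.
Qed.

Definition binsum (w : nat -> bool) : R ^nat :=
  series (fun i : nat => ((w i)%:R / 2 ^+ i.+1 : R)).

Lemma binsumE w n : binsum w n = (bnum w n)%:R / 2 ^+ n.
Proof.
elim: n => [|n IH]; first by rewrite /binsum /series /= big_geq // mul0r.
rewrite /binsum seriesSr -/(binsum w n) IH /= natrD -muln2 natrM exprS.
by have h := pow2_gt0 n; field; rewrite gt_eqF.
Qed.

Lemma binsum_nd w : nondecreasing_seq (binsum w).
Proof.
apply/nondecreasing_seqP => n; rewrite /binsum seriesSr lerDl.
by rewrite divr_ge0 ?ler0n // ltW ?pow2_gt0.
Qed.

Lemma binsum_cvg w : cvgn (binsum w).
Proof.
apply: nondecreasing_is_cvgn; first exact: binsum_nd.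
exists 1 => _ [n _ <-]; rewrite binsumE.
apply: (@le_trans _ _ ((2 ^ n)%:R / 2 ^+ n)).
  by rewrite ler_dyadic ltnW // bnum_lt.
by rewrite natrX divff // gt_eqF ?pow2_gt0.
Qed.

Lemma binval_bounds w N :
  (bnum w N)%:R / 2 ^+ N <= (binval w : R) <=
  (bnum w N + 1)%:R / 2 ^+ N.
Proof.
apply/andP; split.
  by rewrite -binsumE; exact: (nondecreasing_cvgn_le (@binsum_nd w) (@binsum_cvg w)).
apply: limr_le; first exact: binsum_cvg.
near=> n.
have Nn : (N <= n)%N by near: n; exact: nbhs_infty_ge.
rewrite -/(binsum w n) binsumE (dyadic_rescale _ Nn) ler_dyadic.
have [_] := bnum_bound w N (n - N); rewrite subnKC // mulnC; lia.
Unshelve. all: by end_near.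
Qed.

Lemma binval_close (u v : nat -> bool) M : bnum u M = bnum v M ->
  `|binval u - binval v| <= (2 ^+ M)^-1 :> R.
Proof.
move=> E; have /andP[h1 h2] := binval_bounds u M.
have /andP[h3 h4] := binval_bounds v M.
rewrite E dyadic_succ in h1 h2; rewrite dyadic_succ in h4.
by rewrite ler_distl; apply/andP; split; lra.
Qed.

Lemma binval_close_interval (u v : nat -> bool) n m (p : R) : (n <= m)%N ->
  bnum u n = bnum v n ->
  (bnum v m)%:R / 2 ^+ m < p < (bnum v m + 1)%:R / 2 ^+ m ->
  `|binval u - p| <= (2 ^+ n)^-1.
Proof.
move=> nm agree /andP[h1 h2]; have [m1 m2] := dyadic_intervals_nested v nm.
have /andP[b1 b2] := binval_bounds u n; rewrite agree in b1 b2.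
rewrite dyadic_succ in b2; rewrite [X in _ <= X]dyadic_succ in m2.
apply: (dist_le_of_interval (A := (bnum v n)%:R / 2 ^+ n)); first by rewrite b1 b2.
by rewrite (le_trans m1 (ltW h1)) (le_trans (ltW h2) m2).
Qed.

Lemma inv_pow2_le n m : (n <= m)%N -> (2 ^+ m)^-1 <= (2 ^+ n)^-1 :> R.
Proof.
by move=> nm; rewrite lef_pV2 ?posrE ?pow2_gt0 // ler_eXn2l // ltr1n.
Qed.

Lemma inv_pow2_small (d : R) : 0 < d -> exists n, (2 ^+ n)^-1 < d.
Proof.
move=> d0; exists (Num.Def.archi_bound d^-1).
set n := Num.Def.archi_bound _.
have /archi_boundP h1 : 0 <= d^-1 by rewrite invr_ge0 ltW.
have h2 : (n%:R : R) < 2 ^+ n by rewrite -natrX ltr_nat ltn_expl.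
rewrite -[d in _ < d]invrK ltf_pV2 ?posrE ?pow2_gt0 ?invr_gt0 //.
exact: lt_trans h1 h2.
Qed.

Lemma eq_of_close (a b : R) N :
  (forall n, (N <= n)%N -> `|a - b| <= (2 ^+ n)^-1) -> a = b.
Proof.
move=> close; apply/eqP; apply: contraT => neq.
have [n0 Hn0] : exists n, (2 ^+ n)^-1 < `|a - b|.
  by apply: inv_pow2_small; rewrite normr_gt0 subr_eq0.
have := le_trans (close _ (leq_maxr n0 N)) (inv_pow2_le (leq_maxl n0 N)).
by rewrite leNgt Hn0.
Qed.

Lemma binval_gt (w : nat -> bool) N : ~ ends_in_zeros w ->
  (bnum w N)%:R / 2 ^+ N < (binval w : R).
Proof.
move=> nz; have [j [Nj wj]] : exists j, (N <= j)%N /\ w j.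
  apply: contrapT => none; apply: nz; exists N => n Nn.
  by apply/negbTE/negP => wn; apply: none; exists n.
have /andP[h _] := binval_bounds w j.+1.
apply: lt_le_trans h; rewrite (@dyadic_rescale _ N j.+1) ?ltr_dyadic ?leqW //.
have [h1 _] := bnum_bound w N (j - N); rewrite subnKC // in h1.
by rewrite /= wj subSn // expnS; lia.
Qed.

Lemma bnum_diff (w1 w2 : nat -> bool) : w1 <> w2 -> exists M, bnum w1 M <> bnum w2 M.
Proof.
move=> ne; have [i hi] : exists i, w1 i <> w2 i.
  apply: contrapT => H; apply: ne; apply: funext => i.
  by apply: contrapT => H'; apply: H; exists i.
by exists i.+1 => /(bnum_eqP w1 w2 i.+1).2 /(_ i (ltnSn i)).
Qed.

Lemma binval_inj (w1 w2 : nat -> bool) : ~ ends_in_zeros w1 -> ~ ends_in_zeros w2 ->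
  (binval w1 : R) = binval w2 -> w1 = w2.
Proof.
move=> e1 e2 E; apply: contrapT => /bnum_diff [M hM].
have below v1 v2 : ~ ends_in_zeros v2 ->
    (bnum v1 M < bnum v2 M)%N -> (binval v1 : R) < binval v2.
  move=> e lt; have /andP[_ h1] := binval_bounds v1 M.
  by apply: le_lt_trans h1 (le_lt_trans _ (binval_gt M e)); rewrite ler_dyadic addn1.
case: (ltngtP (bnum w1 M) (bnum w2 M)) => [lt|lt|//].
  by have := below _ _ e2 lt; rewrite E ltxx.
by have := below _ _ e1 lt; rewrite E ltxx.
Qed.

Lemma binval_inj_nondyadic (w1 w2 : nat -> bool) :
  (binval w1 : R) = binval w2 -> ~ dyadic_rational (binval w1 : R) -> w1 = w2.
Proof.
move=> E nd; apply: contrapT => /bnum_diff [M hM].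
have at_endpoint v1 v2 : (binval v1 : R) = binval v2 ->
    (bnum v1 M < bnum v2 M)%N -> (binval v1 : R) = (bnum v1 M + 1)%:R / 2 ^+ M.
  move=> E' lt; have /andP[_ h1] := binval_bounds v1 M.
  have /andP[h2 _] := binval_bounds v2 M.
  apply/eqP; rewrite eq_le h1 E' (le_trans _ h2) //.
  by rewrite ler_dyadic addn1.
case: (ltngtP (bnum w1 M) (bnum w2 M)) => [lt|lt|//]; apply: nd.
  by rewrite (at_endpoint _ _ E lt); exact: dyadic_rational_frac.
by rewrite E (at_endpoint _ _ (esym E) lt); exact: dyadic_rational_frac.
Qed.

Lemma binval_zeros (w : nat -> bool) M : (forall n, (M <= n)%N -> w n = false) ->
  (binval w : R) = (bnum w M)%:R / 2 ^+ M.
Proof.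
move=> w0; apply: (@eq_of_close _ _ M) => n Mn.
have E : bnum w n = (bnum w M * 2 ^ (n - M))%N.
  by rewrite -(subnKC Mn) bnum_zeros // mulnC subnKC.
rewrite (dyadic_rescale _ Mn) -E.
have /andP[h1] := binval_bounds w n; rewrite dyadic_succ => h2.
by rewrite ger0_norm ?subr_ge0 //; lra.
Qed.

Lemma binval_range (u : nat -> bool) : ~ ends_in_zeros u -> 0 < (binval u : R) <= 1.
Proof.
move=> e; apply/andP; split; first by have := binval_gt 0 e; rewrite /= mul0r.
by have /andP[_] := binval_bounds u 0; rewrite /= expr0 divr1.
Qed.

Lemma bnum_of_interval (z : nat -> bool) (a M : nat) :
  ~ ends_in_zeros z ->
  a%:R / 2 ^+ M < (binval z : R) < (a + 1)%:R / 2 ^+ M -> bnum z M = a.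
Proof.
move=> nz /andP[h1 h2]; have g1 := binval_gt M nz.
have /andP[_ g2] := binval_bounds z M.
have : (bnum z M < a + 1)%N by rewrite -(ltr_dyadic _ _ M) (lt_trans g1 h2).
have : (a < bnum z M + 1)%N by rewrite -(ltr_dyadic _ _ M) (lt_le_trans h1 g2).
by lia.
Qed.

Section GreedyExpansion.
Variable x : R.
Hypothesis x01 : 0 < x <= 1.

(* The greedy digits of x: [gnum n] is the largest integer with
   gnum n < x 2^n, and digit n is 1 iff 2 gnum n + 1 < x 2^(n+1). *)
Fixpoint gnum n : nat :=
  if n is m.+1 then
    (((((gnum m).*2.+1)%:R : R) < x * 2 ^+ m.+1)%R + (gnum m).*2)%N
  else 0%N.
Definition greedy_word m := (((gnum m).*2.+1)%:R : R) < x * 2 ^+ m.+1.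

Lemma bnum_greedy n : bnum greedy_word n = gnum n.
Proof. by elim: n => //= n ->. Qed.

Lemma gnum_spec n : (gnum n)%:R < x * 2 ^+ n <= (gnum n + 1)%:R.
Proof.
elim: n => [|n IH]; first by rewrite /= expr0 mulr1 add0n.
have E : x * 2 ^+ n.+1 = 2 * (x * 2 ^+ n) by rewrite exprS mulrCA.
rewrite [gnum n.+1]/= E; move: IH; set X := x * 2 ^+ n; set A := gnum n.
have hA : (A.*2.+1)%:R = 2 * A%:R + 1 :> R by rewrite -addn1 -muln2 natrD natrM mulrC.
have hB : (A.*2)%:R = 2 * A%:R :> R by rewrite -muln2 natrM mulrC.
rewrite hA natrD.
case: (boolP (2 * A%:R + 1 < 2 * X)) => b /andP[h1 h2];
  by rewrite !natrD hB /= ?mulr1n ?mulr0n ?add0r; apply/andP; split; lra.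
Qed.

Lemma binval_greedy : (binval greedy_word : R) = x.
Proof.
apply: (@eq_of_close _ _ 0) => n _.
have /andP[h1 h2] := binval_bounds greedy_word n.
have /andP[h3 h4] := gnum_spec n; rewrite bnum_greedy dyadic_succ in h1 h2.
have p := pow2_gt0 n.
have q1 : (gnum n)%:R / 2 ^+ n < x by rewrite ltr_pdivrMr.
have q2 : x <= (gnum n + 1)%:R / 2 ^+ n by rewrite ler_pdivlMr.
rewrite dyadic_succ in q2; rewrite ler_distl; lra.
Qed.

Lemma greedy_nonzeros : ~ ends_in_zeros greedy_word.
Proof.
move=> [N zeros]; set e := x * 2 ^+ N - (gnum N)%:R.
have e0 : 0 < e by rewrite subr_gt0; case/andP: (gnum_spec N).
have [d hd] := inv_pow2_small e0.
have := gnum_spec (N + d); rewrite -bnum_greedy (bnum_zeros d zeros) bnum_greedy.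
case/andP => _; rewrite exprD mulrA natrD natrM natrX => h.
have : e * 2 ^+ d <= 1 by rewrite /e mulrBl; move: h; rewrite [_ * 2 ^+ d]mulrC; lra.
by rewrite -ler_pdivlMr ?pow2_gt0 // mul1r leNgt hd.
Qed.

End GreedyExpansion.

Lemma xtildeP (x : R) : 0 < x <= 1 ->
  binval (xtilde x) = x /\ ~ ends_in_zeros (xtilde x).
Proof.
move=> x01; apply: (@epsilon_spec _ (inhabits (fun _ : nat => false))
  (fun w : nat -> bool => (binval w : R) = x /\ ~ ends_in_zeros w)).
by exists (greedy_word x); split; [exact: binval_greedy | exact: greedy_nonzeros].
Qed.

Lemma xtilde_binval (u : nat -> bool) : ~ ends_in_zeros u -> xtilde (binval u : R) = u.
Proof.
move=> e; have [h1 h2] := xtildeP (binval_range e).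
exact: binval_inj h2 e h1.
Qed.

End BinaryExpansions.

Section Concatenation.
Local Open Scope nat_scope.
Implicit Types (u v : nat -> seq bool).

Lemma prefix_catD u m d :
  prefix_cat u (m + d) = prefix_cat u m ++ flatten [seq u i | i <- iota m d].
Proof. by rewrite /prefix_cat iotaD map_cat flatten_cat add0n. Qed.

Lemma prefix_catS u m : prefix_cat u m.+1 = prefix_cat u m ++ u m.
Proof. by rewrite -addn1 prefix_catD /= cats0. Qed.

Lemma prefix_cat_nil u m m' : m <= m' ->
  (forall i, m <= i < m' -> u i = [::]) -> prefix_cat u m' = prefix_cat u m.
Proof.
move=> /subnKC <-; elim: (m' - m) => [|d IH] nil; first by rewrite addn0.
rewrite addnS prefix_catS IH => [|i /andP[h1 h2]]; last by apply: nil; lia.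
by rewrite nil ?cats0 //; lia.
Qed.

Lemma inf_catP u n : inf_cat u n <-> exists m, nth false (prefix_cat u m) n.
Proof. by rewrite /inf_cat; split => [/asboolP|/asboolP]. Qed.

Lemma inf_cat_eq u v :
  (forall m, exists m' t, prefix_cat v m' = prefix_cat u m ++ t) ->
  (forall m, exists m' t, prefix_cat u m' = prefix_cat v m ++ t) ->
  inf_cat u = inf_cat v.
Proof.
have extend u' v' : (forall m, exists m' t, prefix_cat v' m' = prefix_cat u' m ++ t) ->
    forall n, inf_cat u' n -> inf_cat v' n.
  move=> pre n /inf_catP [m hm]; apply/inf_catP; have [m' [t pre_m]] := pre m.
  exists m'; rewrite pre_m nth_cat; case: ltnP => // hn.
  by rewrite nth_default in hm.
by move=> uv vu; apply: funext => n; apply/idP/idP; apply: extend.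
Qed.

Lemma inf_cat_finite u N : (forall i, N <= i -> u i = [::]) ->
  forall n, size (prefix_cat u N) <= n -> inf_cat u n = false.
Proof.
move=> nil n hn; apply/negbTE/negP => /inf_catP [m hm].
have : n < size (prefix_cat u m).
  by apply: contraTT hm; rewrite -leqNgt => h; rewrite nth_default.
case: (leqP m N) => hmN.
  by rewrite -(subnKC hmN) prefix_catD size_cat in hn; lia.
by rewrite (prefix_cat_nil (ltnW hmN)) => [|i /andP[h _]]; [lia | exact: nil].
Qed.

End Concatenation.

Definition inf_nonempty (U : nat -> seq bool) : Prop :=
  forall N, exists i, (N <= i)%N /\ U i != [::].

Section NonemptyFactors.
Local Open Scope nat_scope.
Variable U : nat -> seq bool.
Hypothesis U_inf : inf_nonempty U.

Lemma exists_nonempty_from m : exists i, (m <= i) && (U i != [::]).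
Proof. by have [i [h1 h2]] := U_inf m; exists i; rewrite h1 h2. Qed.

Definition next_nonempty m := ex_minn (exists_nonempty_from m).

Lemma next_nonemptyP m : [/\ m <= next_nonempty m, U (next_nonempty m) != [::] &
  forall i, m <= i < next_nonempty m -> U i = [::]].
Proof.
rewrite /next_nonempty; case: ex_minnP => r /andP[h1 h2] min; split => //.
move=> i /andP[hi1 hi2]; apply/eqP; apply: contraTT hi2 => ne.
by rewrite -leqNgt; apply: min; rewrite hi1.
Qed.

Lemma next_nonempty_uniq m r : m <= r -> U r != [::] ->
  (forall i, m <= i < r -> U i = [::]) -> next_nonempty m = r.
Proof.
move=> h1 h2 nil; have [s1 s2 s3] := next_nonemptyP m.
apply/eqP; rewrite eqn_leq; apply/andP; split; rewrite leqNgt; apply/negP => lt.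
  by move: h2; rewrite s3 // h1.
by move: s2; rewrite nil // s1.
Qed.

(* [nonempty_pos n] is the index of the n-th nonempty factor; the search
   for it starts at [search_start n]. *)
Fixpoint search_start n := if n is n'.+1 then (next_nonempty (search_start n')).+1 else 0.
Definition nonempty_pos n := next_nonempty (search_start n).

Lemma nonempty_pos_ne n : U (nonempty_pos n) != [::].
Proof. by have [] := next_nonemptyP (search_start n). Qed.

Lemma nonempty_pos_mono m n : m < n -> nonempty_pos m < nonempty_pos n.
Proof.
have step j : nonempty_pos j < nonempty_pos j.+1.
  by have [] := next_nonemptyP (search_start j.+1).
elim: n => // n IH; rewrite ltnS leq_eqVlt => /orP[/eqP ->|h]; first exact: step.
exact: ltn_trans (IH h) (step n).
Qed.

Lemma nonempty_pos_ge n : n <= nonempty_pos n.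
Proof.
elim: n => // n IH; exact: leq_ltn_trans IH (nonempty_pos_mono (ltnSn n)).
Qed.

Lemma prefix_cat_nonempty n :
  prefix_cat U (search_start n) = prefix_cat (fun i => U (nonempty_pos i)) n.
Proof.
elim: n => // n IH; rewrite [search_start n.+1]/= !prefix_catS -IH.
by have [s1 _ s3] := next_nonemptyP (search_start n); rewrite (prefix_cat_nil s1 s3).
Qed.

Lemma inf_cat_nonempty : inf_cat (fun i => U (nonempty_pos i)) = inf_cat U.
Proof.
apply: inf_cat_eq => m.
  by exists (search_start m), [::]; rewrite cats0 prefix_cat_nonempty.
exists m.+1; rewrite -prefix_cat_nonempty [search_start m.+1]/= -/(nonempty_pos m).
have h : m <= (nonempty_pos m).+1 by rewrite leqW // nonempty_pos_ge.
by rewrite -(subnKC h) prefix_catD; eexists.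
Qed.

End NonemptyFactors.

Section NonemptyFactorsAgree.
Local Open Scope nat_scope.
Variables U Z : nat -> seq bool.
Hypotheses (U_inf : inf_nonempty U) (Z_inf : inf_nonempty Z).
Variable N : nat.
Hypothesis agree : forall i, i < N -> U i = Z i.

Lemma next_nonempty_agree m : next_nonempty U_inf m < N ->
  next_nonempty Z_inf m = next_nonempty U_inf m.
Proof.
move=> lt; have [s1 s2 s3] := next_nonemptyP U_inf m.
apply: next_nonempty_uniq => //; first by rewrite -agree.
by move=> i /andP[h1 h2]; rewrite -agree ?s3 ?h1 // (ltn_trans h2).
Qed.

Lemma search_start_agree n : (forall j, j < n -> nonempty_pos U_inf j < N) ->
  search_start Z_inf n = search_start U_inf n.
Proof.
elim: n => // n IH below /=; rewrite IH => [|j hj]; last by rewrite below // ltnW.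
by rewrite next_nonempty_agree // below.
Qed.

Lemma nonempty_pos_agree n0 : nonempty_pos U_inf n0 = N -> Z N != [::] ->
  nonempty_pos Z_inf n0 = N.
Proof.
move=> hp hz; rewrite /nonempty_pos search_start_agree => [|j hj]; last first.
  by rewrite -hp nonempty_pos_mono.
have [s1 _ s3] := next_nonemptyP U_inf (search_start U_inf n0).
rewrite -/(nonempty_pos U_inf n0) hp in s1 s3.
apply: next_nonempty_uniq => // i /andP[h1 h2].
by rewrite -agree // s3 // h1.
Qed.

End NonemptyFactorsAgree.

Section Blocks.
Local Open Scope nat_scope.
Variable k : nat.
Hypothesis k_gt0 : 0 < k.

Definition word_of (B : nat -> k.-tuple bool) : nat -> bool :=
  fun n => nth false (B (n %/ k)) (n %% k).

Lemma kblock_nth w i j : j < k -> nth false (kblock k w i) j = w (i * k + j).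
Proof. by move=> hj; rewrite /kblock (nth_mktuple _ _ (Ordinal hj)). Qed.

Lemma kblock_word_of B i : kblock k (word_of B) i = B i.
Proof.
apply: eq_from_tnth => j; rewrite tnth_mktuple /word_of.
rewrite divnMDl // modnMDl divn_small // modn_small // addn0.
by rewrite (tnth_nth false).
Qed.

Lemma word_of_kblock w : word_of (kblock k w) = w.
Proof. by apply: funext => n; rewrite /word_of kblock_nth ?ltn_pmod // -divn_eq. Qed.

Lemma kblock_eq w1 w2 i : (forall n, n < i.+1 * k -> w1 n = w2 n) ->
  kblock k w1 i = kblock k w2 i.
Proof.
move=> eqw; apply: eq_from_tnth => j; rewrite !tnth_mktuple; apply: eqw.
by rewrite mulSn [k + _]addnC ltn_add2l.
Qed.

Lemma bnum_blocks_agree w B N : (forall i, i < N -> kblock k w i = B i) ->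
  bnum w (N * k) = bnum (word_of B) (N * k).
Proof.
move=> agree; apply/bnum_eqP => n hn.
by rewrite -{1}(word_of_kblock w) /word_of agree // ltn_divLR.
Qed.

Lemma nonzeros_blocksP w : ~ ends_in_zeros w <->
  forall N, exists i, N <= i /\ true \in kblock k w i.
Proof.
split=> [nz N|ones [M zeros]].
  apply: contrapT => none; apply: nz; exists (N * k) => n hn.
  apply/negbTE/negP => wn; apply: none; exists (n %/ k); split; first by rewrite leq_divRL.
  apply/(nthP false); exists (n %% k); first by rewrite size_tuple ltn_pmod.
  by rewrite kblock_nth ?ltn_pmod // -divn_eq.
have [i [hi /(nthP false) [j hj]]] := ones M.
rewrite size_tuple in hj; rewrite kblock_nth // zeros //.
by apply: leq_trans hi _; rewrite (leq_trans (leq_pmulr _ k_gt0)) // leq_addr.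
Qed.

End Blocks.

Lemma exists_other_block k (e d : k.-tuple bool) : (2 <= k)%N ->
  exists c : k.-tuple bool, c != e /\ c != d.
Proof.
move=> k2; apply: contrapT => none.
have sub : ([set: k.-tuple bool] \subset [set e; d])%SET.
  apply/fintype.subsetP => c _; rewrite !inE; apply/negPn/negP.
  by rewrite negb_or => /andP[h1 h2]; apply: none; exists c.
have := subset_leq_card sub; rewrite cardsT card_tuple card_bool cards2.
have : (2 ^ 2 <= 2 ^ k)%N by rewrite leq_exp2l.
by case: (e != d); lia.
Qed.

Lemma zero_blocks_eq k (t1 t2 : k.-tuple bool) :
  true \notin t1 -> true \notin t2 -> t1 = t2.
Proof.
have zero t j : true \notin t -> tnth t j = false.
  by move=> nt; apply/negbTE/negP => h; move: (mem_tnth j t); rewrite h (negbTE nt).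
by move=> h1 h2; apply: eq_from_tnth => j; rewrite !zero.
Qed.

Section ErasingSubstitution.
Variables (k : nat) (sigma : k.-tuple bool -> seq bool) (we : k.-tuple bool).
Hypothesis k_gt0 : (0 < k)%N.
Hypothesis erasing : erasing_subst sigma we.

Definition block_images (u : nat -> bool) (i : nat) := sigma (kblock k u i).

Lemma sigma_we : sigma we = [::].
Proof. by case: erasing. Qed.

Lemma erasedP b : (sigma b == [::]) = (b == we).
Proof.
case: erasing => s_we only_we; apply/eqP/eqP => [|->] //; exact: only_we.
Qed.

Lemma nonerased_decomp u (U_inf : inf_nonempty (block_images u)) :
  block_decomp sigma (fun n => kblock k u (nonempty_pos U_inf n)) (subst_word sigma u).
Proof.
split; last exact: inf_cat_nonempty.
by move=> n; apply/eqP; exact: (nonempty_pos_ne U_inf n).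
Qed.

Section ErasedInsertion.
Variables (u : nat -> bool) (N : nat).

Definition insert_erased : nat -> bool :=
  word_of (fun i => if (i < N)%N then kblock k u i
                    else if i == N then we else kblock k u i.-1).

Lemma kblock_insert_erased i : kblock k insert_erased i =
  if (i < N)%N then kblock k u i else if i == N then we else kblock k u i.-1.
Proof. exact: kblock_word_of. Qed.

Lemma subst_insert_erased :
  subst_word sigma insert_erased = subst_word sigma u.
Proof.
rewrite /subst_word; under eq_fun do rewrite kblock_insert_erased.
have pre m : prefix_cat (fun i => sigma (if (i < N)%N then kblock k u i
    else if i == N then we else kblock k u i.-1)) m =
    prefix_cat (block_images u) (if (m <= N)%N then m else m.-1).
  elim: m => [|m IH] //; rewrite prefix_catS IH; case: (ltngtP m N) => h.
  - by rewrite prefix_catS.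
  - by rewrite (_ : m.+1.-1 = m.-1.+1) ?prefix_catS //; lia.
  - by rewrite sigma_we cats0.
apply: inf_cat_eq => m.
  by exists (if (m <= N)%N then m else m.-1), [::]; rewrite cats0 pre.
exists (if (m < N)%N then m else m.+1), [::]; rewrite cats0 pre.
by case: (ltnP m N) => h; [rewrite ltnW | rewrite ifF //; lia].
Qed.

Lemma insert_erased_nonzeros : ~ ends_in_zeros u -> ~ ends_in_zeros insert_erased.
Proof.
move=> /(nonzeros_blocksP k_gt0) ones; apply/(nonzeros_blocksP k_gt0) => M.
have [i [hi ht]] := ones (M + N)%N; exists i.+1; split; first by lia.
rewrite kblock_insert_erased ifF; last by lia.
by rewrite ifF //; apply/eqP; lia.
Qed.

Hypothesis uN_not_erased : kblock k u N != we.

(* If the block of u at N is not erased, the new word is not we^oo (its block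
   at N+1 is that one) and differs from u (its block at N is we). *)
Lemma insert_erased_nonperiodic : ~ is_periodic_block we insert_erased.
Proof.
move=> /(_ N.+1); rewrite kblock_insert_erased ltnNge leqnSn /=.
by rewrite (_ : N.+1 == N = false) /= => [/eqP|]; [rewrite (negbTE uN_not_erased) | lia].
Qed.

Lemma insert_erased_neq : insert_erased <> u.
Proof.
by move=> eq_u; have := kblock_insert_erased N; rewrite eq_u ltnn eqxx => /eqP;
  rewrite (negbTE uN_not_erased).
Qed.

End ErasedInsertion.

Section ErasedInterleaving.
Variable b : nat -> k.-tuple bool.

Definition interleave_erased : nat -> bool :=
  word_of (fun i => if odd i then b i./2 else we).

Lemma kblock_interleave_erased i :
  kblock k interleave_erased i = if odd i then b i./2 else we.
Proof. exact: kblock_word_of. Qed.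

Lemma subst_interleave_erased :
  subst_word sigma interleave_erased = inf_cat (fun i => sigma (b i)).
Proof.
rewrite /subst_word; under eq_fun do rewrite kblock_interleave_erased.
have pre m : prefix_cat (fun i => sigma (if odd i then b i./2 else we)) m.*2 =
    prefix_cat (fun i => sigma (b i)) m.
  elim: m => // m IH; rewrite doubleS !prefix_catS IH /= odd_double /= uphalf_double.
  by rewrite sigma_we cats0.
apply: inf_cat_eq => m; last by exists m.*2, [::]; rewrite cats0 pre.
by exists m; rewrite -pre -addnn prefix_catD; eexists.
Qed.

Hypothesis b_nonerased : forall i, sigma (b i) <> [::].

(* The interleaved word does not end in zeros: either we or every b i
   contains a 1. *)
Lemma interleave_erased_nonzeros : ~ ends_in_zeros interleave_erased.
Proof.
apply/(nonzeros_blocksP k_gt0) => M; case: (boolP (true \in we)) => ht.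
  by exists M.*2; rewrite kblock_interleave_erased odd_double -addnn leq_addr.
exists M.*2.+1; rewrite kblock_interleave_erased /= odd_double /= uphalf_double.
split; first by rewrite -addnn ltnW // ltnS leq_addr.
apply/negPn/negP => hb; have := @b_nonerased M.
by rewrite (zero_blocks_eq hb ht) sigma_we.
Qed.

Lemma interleave_erased_nonperiodic : ~ is_periodic_block we interleave_erased.
Proof.
move=> /(_ 1%N); rewrite kblock_interleave_erased /= => b0.
by apply: (@b_nonerased 0%N); rewrite b0 sigma_we.
Qed.

End ErasedInterleaving.

End ErasingSubstitution.

Section Fibre.
Variables (R : realType) (k : nat) (sigma : k.-tuple bool -> seq bool).
Variables (we : k.-tuple bool) (y : R).
Hypothesis k_ge2 : (2 <= k)%N.
Hypothesis erasing : erasing_subst sigma we.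
Hypothesis unique_decomp : forall w : nat -> bool, binval w = y ->
  forall b1 b2 : nat -> k.-tuple bool,
    block_decomp sigma b1 w -> block_decomp sigma b2 w -> b1 = b2.
Hypothesis y_nondyadic : ~ dyadic_rational y.

Let k_gt0 : (0 < k)%N. Proof. exact: leq_trans k_ge2. Qed.

Definition fibre := [set x : R | x \in `[0, 1] /\ f_sigma sigma we x = y].

Lemma y_neq0 : y <> 0.
Proof. by move=> y0; apply: y_nondyadic; exists 0%:Z, 0%N; rewrite y0 mul0r. Qed.

(* Since y <> 0, points of the fibre are genuinely mapped by the formula. *)
Lemma fibreP x : fibre x -> [/\ 0 < x <= 1, ~ is_periodic_block we (xtilde x)
  & binval (subst_word sigma (xtilde x)) = y].
Proof.
case=> _; rewrite /f_sigma; case: asboolP => [[h1 h2] E|_ E]; first by split.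
by have := y_neq0; rewrite E.
Qed.

Lemma fibre_binval (u : nat -> bool) : ~ ends_in_zeros u ->
  ~ is_periodic_block we u -> binval (subst_word sigma u) = y -> fibre (binval u).
Proof.
move=> nz np E; have /andP[h1 h2] := binval_range R nz; split.
  by rewrite in_itv /= h2 ltW.
rewrite /f_sigma xtilde_binval //; case: asboolP => // -[]; split => //.
exact/andP.
Qed.

Lemma images_inf_nonempty u : binval (subst_word sigma u) = y ->
  inf_nonempty (block_images sigma u).
Proof.
move=> E N; apply: contrapT => none; apply: y_nondyadic.
have nil i : (N <= i)%N -> block_images sigma u i = [::].
  by move=> hi; apply/eqP; apply: contraT => ne; exfalso; apply: none; exists i.
rewrite -E /subst_word (binval_zeros R (inf_cat_finite nil)).
exact: dyadic_rational_frac.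
Qed.

(* Every point of the fibre is a limit of other points of the fibre: insert
   an erased block far away in its expansion. *)
Lemma fibre_perfect x : fibre x -> forall d : R, 0 < d ->
  exists x', [/\ fibre x', x' != x & `|x - x'| < d].
Proof.
move=> Sx d d0; have [x01 np E] := fibreP Sx; have [bx nz] := xtildeP x01.
have U_inf := images_inf_nonempty E.
set u := xtilde x in np E bx nz U_inf; have [L hL] := inv_pow2_small d0.
set N := nonempty_pos U_inf L.
have neN : kblock k u N != we by rewrite -(erasedP erasing); exact: (nonempty_pos_ne U_inf L).
set u' := insert_erased we u N.
have nz' : ~ ends_in_zeros u' := insert_erased_nonzeros k_gt0 nz.
exists (binval u'); split.
- apply: fibre_binval => //; first exact: (insert_erased_nonperiodic k_gt0 neN).
  by rewrite (subst_insert_erased k_gt0 erasing).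
- apply/eqP => eq_x; apply: (insert_erased_neq k_gt0 neN).
  by apply: (binval_inj (R := R)) => //; rewrite eq_x bx.
- have agree : bnum u (N * k) = bnum u' (N * k).
    by apply: bnum_blocks_agree => // i hi /=; rewrite hi.
  rewrite -{1}bx; apply: le_lt_trans (binval_close R agree) _.
  apply: le_lt_trans (inv_pow2_le _ _) hL.
  by rewrite (leq_trans (nonempty_pos_ge U_inf L)) // leq_pmulr.
Qed.

(* The fibre is nonempty: interleave the blocks of a decomposition of y~
   (which exists by optimality) with erased blocks. *)
Lemma fibre_nonempty : optimal sigma -> y \in `[0, 1] -> exists x, fibre x.
Proof.
move=> optimality y01.
have y01' : 0 < y <= 1.
  move: y01; rewrite in_itv /= => /andP[h1 ->]; rewrite andbT lt_neqAle h1 andbT.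
  by apply/eqP => /esym; apply: y_neq0.
have [by_ _] := xtildeP y01'; have [b [b_nonerased bcat]] := optimality (xtilde y).
exists (binval (interleave_erased we b)); apply: fibre_binval.
- exact: (interleave_erased_nonzeros k_gt0 erasing b_nonerased).
- exact: (interleave_erased_nonperiodic k_gt0 erasing b_nonerased).
- by rewrite (subst_interleave_erased k_gt0 erasing) bcat by_.
Qed.

(* The heart of the argument: by uniqueness of block decompositions of
   y~ (y is not dyadic, so y~ is its only expansion), two fibre points whose
   expansions agree up to the L-th non-erased block of the first, at
   position N, have the same block at N if the second one is not erased. *)
Lemma fibre_same_block s p (U_inf : inf_nonempty (block_images sigma (xtilde s))) L :
  fibre s -> fibre p ->
  (forall i, (i < nonempty_pos U_inf L)%N -> kblock k (xtilde p) i = kblock k (xtilde s) i) ->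
  kblock k (xtilde p) (nonempty_pos U_inf L) != we ->
  kblock k (xtilde p) (nonempty_pos U_inf L) = kblock k (xtilde s) (nonempty_pos U_inf L).
Proof.
set N := nonempty_pos U_inf L; move=> Ss Sp agree pN.
have [_ _ Es] := fibreP Ss; have [_ _ Ep] := fibreP Sp.
have Z_inf := images_inf_nonempty Ep.
have same_word : subst_word sigma (xtilde p) = subst_word sigma (xtilde s).
  by apply: (binval_inj_nondyadic (R := R)); rewrite Ep ?Es.
have decomp_p := nonerased_decomp Z_inf; rewrite same_word in decomp_p.
have posZ : nonempty_pos Z_inf L = N.
  apply: (@nonempty_pos_agree _ _ U_inf Z_inf) => //.
    by move=> i /agree; rewrite /block_images => ->.
  by rewrite /block_images (erasedP erasing).
have := unique_decomp Es (nonerased_decomp U_inf) decomp_p.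
by move=> /(congr1 (fun b => b L)) /=; rewrite posZ.
Qed.

(* Next to every point s of the fibre there are open intervals missing the
   fibre: keep the blocks of s~ before its L-th non-erased block, at position
   N, and replace the block at N by a block c that is neither erased nor the
   block of s~.  The dyadic interval of this (N+1)-block prefix is close to s,
   and no fibre point lies inside it by [fibre_same_block]. *)
Lemma fibre_gap s : fibre s -> forall d : R, 0 < d -> exists l r : R,
  [/\ l < r, (forall p, l < p < r -> `|s - p| < d) & (forall p, l < p < r -> ~ fibre p)].
Proof.
move=> Ss d d0; have [s01 _ E] := fibreP Ss; have [bs nz] := xtildeP s01.
have U_inf := images_inf_nonempty E.
set u := xtilde s in E bs nz U_inf *; have [L hL] := inv_pow2_small d0.
set N := nonempty_pos U_inf L.
have [c [c_we c_u]] := exists_other_block we (kblock k u N) k_ge2.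
set B := fun i => if (i < N)%N then kblock k u i else c.
set M := (N.+1 * k)%N; set a := bnum (word_of B) M.
exists (a%:R / 2 ^+ M), ((a + 1)%:R / 2 ^+ M); split.
- by rewrite ltr_dyadic addn1.
- move=> p p_in; rewrite -bs.
  have NM : (N * k <= M)%N by rewrite leq_mul2r leqnSn orbT.
  have agree : bnum u (N * k) = bnum (word_of B) (N * k).
    by apply: bnum_blocks_agree => // i hi; rewrite /B hi.
  apply: le_lt_trans (binval_close_interval NM agree p_in) _.
  apply: le_lt_trans (inv_pow2_le R _) hL.
  by rewrite (leq_trans (nonempty_pos_ge U_inf L)) // leq_pmulr.
- move=> p p_in Sp; have [p01 _ _] := fibreP Sp.
  have [bp nzp] := xtildeP p01; rewrite -bp in p_in.
  have /bnum_eqP same_digits := bnum_of_interval nzp p_in.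
  have kb_p i : (i <= N)%N -> kblock k (xtilde p) i = B i.
    move=> hi; rewrite -[B i](kblock_word_of k_gt0); apply: kblock_eq => n hn.
    by apply: same_digits; rewrite (leq_trans hn) // leq_mul2r ltnS hi orbT.
  have := fibre_same_block (U_inf := U_inf) (L := L) Ss Sp.
  rewrite -/N kb_p // /B ltnn => same.
  have c_eq : c = kblock k u N.
    apply: same c_we => i hi; rewrite kb_p; [by rewrite /B hi | exact: ltnW].
  by rewrite c_eq eqxx in c_u.
Qed.
End Fibre.

Section RealLineTopology.
Variable R : realType.
Implicit Types A C : set R.

Lemma closure_approx A t : closure A t ->
  forall e, 0 < e -> exists s, A s /\ `|t - s| < e.
Proof.
move=> At e e0; have [s [As bs]] := At _ (nbhsx_ballx t e e0).
by exists s; split => //; rewrite -ball_normE.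
Qed.

Lemma perfect_closure A :
  (forall x, A x -> forall d, 0 < d -> exists x', [/\ A x', x' != x & `|x - x'| < d]) ->
  perfect_set (closure A).
Proof.
move=> dense_in_itself; have cA : closed (closure A) := @closed_closure _ A.
split=> //; apply/seteqP; split.
  by rewrite {2}((closure_id _).1 cA); exact: subset_limit_point.
move=> t At U /nbhs_ballP [e /= e0 eU].
have e20 : 0 < e / 2 by rewrite divr_gt0.
have e2e : e / 2 < e by rewrite ltr_pdivrMr // ltr_pMr // ltr1n.
have [s [As ts]] := closure_approx At e20.
have [s' [As' s's ss']] := dense_in_itself s As _ e20.
have in_U z : `|t - z| < e -> U z by move=> tz; apply: eU; rewrite -ball_normE.
have [st|st] := eqVneq s t.
  exists s'; split; [by rewrite -st | exact: subset_closure |].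
  by apply: in_U; rewrite -st (lt_trans ss' e2e).
exists s; split; [by [] | exact: subset_closure |].
by apply: in_U; rewrite (lt_trans ts e2e).
Qed.

Lemma closure_interior_eq0 A :
  (forall s, A s -> forall d, 0 < d -> exists l r : R,
    [/\ l < r, (forall p, l < p < r -> `|s - p| < d) & (forall p, l < p < r -> ~ A p)]) ->
  interior (closure A) = set0.
Proof.
move=> gaps; apply/seteqP; split => // z zint; exfalso.
have Az : closure A z := nbhs_singleton zint.
case/nbhs_ballP: zint => e /= e0 eA.
have e20 : 0 < e / 2 by rewrite divr_gt0.
have [s [As zs]] := closure_approx Az e20.
have [l [r [lr near_s miss]]] := gaps s As _ e20.
set m := (l + r) / 2.
have lmr : l < m < r by rewrite /m; apply/andP; split; lra.
have Am : closure A m.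
  apply: eA; rewrite -ball_normE /=; have := near_s _ lmr.
  have -> : z - m = (z - s) + (s - m) by rewrite addrA subrK.
  by move=> sm; apply: le_lt_trans (ler_normD _ _) _; move: zs sm; lra.
have rl0 : 0 < (r - l) / 2 by rewrite divr_gt0 // subr_gt0.
have [p [Ap mp]] := closure_approx Am rl0.
apply: (miss p) => //; move: mp; rewrite ltr_distl /m => /andP[h1 h2].
by apply/andP; split; lra.
Qed.

(* On the real line, connected components are intervals, so a set with
   empty interior is totally disconnected. *)
Lemma interior_eq0_totally_disconnected C :
  interior C = set0 -> totally_disconnected C.
Proof.
move=> int0 x Cx; apply/seteqP; split => [z Kz|_ ->]; last exact: connected_component_refl.
have K_itv : is_interval (connected_component C x).
  by apply/connected_intervalP; exact: component_connected.
have Kx : connected_component C x x := connected_component_refl Cx.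
have no_pair a b : a < b -> connected_component C x a ->
    connected_component C x b -> False.
  move=> ab Ka Kb; suff : interior C ((a + b) / 2) by rewrite int0.
  apply/nbhs_ballP; exists ((b - a) / 2) => /=; first by rewrite divr_gt0 // subr_gt0.
  move=> q; rewrite -ball_normE /= => hq; apply: (connected_component_sub (x := x)).
  apply: (K_itv a b Ka Kb); move: hq; rewrite ltr_distl => /andP[q1 q2].
  by apply/andP; split; lra.
case: (ltgtP z x) => [zx|xz|//]; first by case: (no_pair _ _ zx Kz Kx).
by case: (no_pair _ _ xz Kx Kz).
Qed.

Lemma closure_segment_compact A (a b : R) : A `<=` `[a, b] -> compact (closure A).
Proof.
move=> Aab; apply: (subclosed_compact (@closed_closure _ A) (@segment_compact R a b)).
have ab_closed : closed (`[a, b] : set R) by apply: interval_closed.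
by rewrite ((closure_id _).1 ab_closed); exact: closureS.
Qed.

End RealLineTopology.

(* The closure of the fibre is a Cantor space. *)
Theorem mainTheorem6 (R : realType) (k : nat) (sigma : k.-tuple bool -> seq bool)
  (we : k.-tuple bool) (y : R) :
  (2 <= k)%N ->
  erasing_subst sigma we ->
  we != [tuple of nseq k true] ->
  optimal sigma ->
  y \in `[0, 1] ->
  (forall w : nat -> bool, binval w = y ->
     forall b1 b2 : nat -> k.-tuple bool,
       block_decomp sigma b1 w -> block_decomp sigma b2 w -> b1 = b2) ->
  ~ dyadic_rational y ->
  let C := closure [set x : R | x \in `[0, 1] /\ f_sigma sigma we x = y] in
  [/\ C !=set0, compact C, perfect_set C, totally_disconnected C
    & interior C = set0].
Proof.
move=> k_ge2 erasing _ optimality y01 unique_decomp y_nondyadic C.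
have int0 : interior C = set0.
  exact: closure_interior_eq0 (fibre_gap k_ge2 erasing unique_decomp y_nondyadic).
split=> //.
- have [x Sx] := fibre_nonempty k_ge2 erasing y_nondyadic optimality y01.
  by exists x; exact: subset_closure.
- by apply: (@closure_segment_compact _ _ 0 1) => x [].
- exact: perfect_closure (fibre_perfect k_ge2 erasing y_nondyadic).
- exact: interior_eq0_totally_disconnected.
Qed.
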